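(* Let $n>2k-t$, $q\geq 3$ and $k>2t+1$. Then \[\theta_{k}-\theta_{k-t}+\left[{n-t\atop k-t}\right]_q-q^{(k-t+1)(k-t)}\left[{n-k-1\atop k-t}\right]_q>\left[{n-t-2\atop k-t-2}\right]_q\left(1+\theta_{t+1}q^{k-t-1}\frac{q^{n-k}-1}{q^{k-t-1}-1}\right).\]
   Context: $\left[{n\atop k}\right]_q=\frac{(q^n-1)\cdots(q^{n-k+1}-1)}{(q^k-1)\cdots(q-1)}$ for $k>0$, $=1$ for $k=0$; $\theta_m=\frac{q^{m+1}-1}{q-1}$; $q$ is a prime power. (In the paper these are the sizes of the two affine constructions: the left side is the size of a maximal $t$-intersecting family of affine $k$-spaces built from an affine $t$-space $\delta$ and an affine $k$-space $\pi$ meeting it in a $(t-1)$-space; the right side is that of the family of affine $k$-spaces meeting a fixed affine $(t+2)$-space in a prescribed set of $(t+1)$-spaces.) *)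

From mathcomp Require Import all_boot all_order all_algebra.
Set Implicit Arguments. Unset Strict Implicit. Unset Printing Implicit Defensive.
Import Order.TTheory GRing.Theory Num.Theory.
Local Open Scope ring_scope.

Definition prime_power (q : nat) : Prop :=
  exists p e : nat, prime p /\ (0 < e)%N /\ q = (p ^ e)%N.

Definition gauss_binom (q n k : nat) : rat :=
  \prod_(i < k) (((q%:R : rat) ^+ (n - i) - 1) / ((q%:R : rat) ^+ i.+1 - 1)).

Definition theta (q m : nat) : rat :=
  ((q%:R : rat) ^+ m.+1 - 1) / ((q%:R : rat) - 1).

(* With m = k - t and N = n - t, both sides are compared factor by factor,
   writing [N, j]_q as the product of the factors (q^(N-i) - 1)/(q^(i+1) - 1).
   Multiplying each factor of [N-m-1, m]_q by q^(m+1) keeps it below the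
   corresponding factor of [N, m]_q, and the last two factors differ by
   (q^(m+1) - 1)/(q^m - 1) >= q; hence
   [N, m]_q - q^((m+1)m) [N-m-1, m]_q >= q [N, m-1]_q.  Similarly
   [N, m-2]_q >= q^(2(m-2)) [N-2, m-2]_q, and since 2 theta_(t+1) <= q^(t+2) <= q^m
   the resulting lower bound beats the right-hand side by an elementary
   inequality.  The difference theta_k - theta_(k-t) is nonnegative and is
   dropped. *)

From mathcomp Require Import all_boot all_order all_algebra.
From mathcomp Require Import ring lra zify.
Set Implicit Arguments. Unset Strict Implicit. Unset Printing Implicit Defensive.
Import Order.TTheory GRing.Theory Num.Theory.
Local Open Scope ring_scope.

Lemma ler_prodB_last (R : realDomainType) (u v : nat -> R) m :
  (forall i, (i <= m)%N -> 0 <= v i <= u i) ->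
  (\prod_(i < m) u i) * (u m - v m)
    <= \prod_(i < m.+1) u i - \prod_(i < m.+1) v i.
Proof.
move=> vu; rewrite !big_ord_recr /=.
have /andP[vm_ge0 _] := vu m (leqnn m).
have Pv_ge0 : 0 <= \prod_(i < m) v i.
  by apply: prodr_ge0 => i _; case/andP: (vu i (ltnW (ltn_ord i))).
have Pv_le : \prod_(i < m) v i <= \prod_(i < m) u i.
  by apply: ler_prod => i _; apply: vu; exact: ltnW.
nra.
Qed.

Section GaussianBinomial.
Variable R : realFieldType.
Implicit Types (x th : R) (a n k i : nat).

Definition qfactor x n i : R := (x ^+ (n - i) - 1) / (x ^+ i.+1 - 1).

Definition qbinom x n k : R := \prod_(i < k) qfactor x n i.

Lemma qbinom_recr x n k : qbinom x n k.+1 = qbinom x n k * qfactor x n k.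
Proof. by rewrite /qbinom big_ord_recr. Qed.

Lemma qfactor_ge0 x n i : 1 <= x -> 0 <= qfactor x n i.
Proof.
move=> x_ge1; apply: divr_ge0; rewrite subr_ge0; exact: exprn_ege1.
Qed.

Lemma qfactor_gt0 x n i : 1 < x -> (i < n)%N -> 0 < qfactor x n i.
Proof.
move=> x_gt1 lt_in; apply: divr_gt0; rewrite subr_gt0 exprn_egt1 //; lia.
Qed.

Lemma qbinom_gt0 x n k : 1 < x -> (k <= n)%N -> 0 < qbinom x n k.
Proof.
move=> x_gt1 le_kn; apply: prodr_gt0 => i _.
by apply: qfactor_gt0 => //; apply: leq_trans le_kn.
Qed.

Lemma qfactor_shift x a n i :
  1 <= x -> x ^+ a * qfactor x n i <= qfactor x (n + a) i.
Proof.
move=> x_ge1; rewrite /qfactor mulrA ler_wpM2r ?invr_ge0 ?subr_ge0 ?exprn_ege1 //.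
have xa_ge1 : 1 <= x ^+ a by exact: exprn_ege1.
have [le_in | lt_ni] := leqP i n.
  have -> : (n + a - i = (n - i) + a)%N by lia.
  rewrite exprD; have := exprn_ege1 (n - i) x_ge1; nra.
have -> : (n - i = 0)%N by lia.
by rewrite expr0 subrr mulr0 subr_ge0 exprn_ege1.
Qed.

Lemma qbinom_shift x a n k :
  1 <= x -> x ^+ (a * k) * qbinom x n k <= qbinom x (n + a) k.
Proof.
move=> x_ge1.
have -> : x ^+ (a * k) = \prod_(i < k) x ^+ a by rewrite prodr_const card_ord exprM.
rewrite -big_split /=.
apply: ler_prod => i _; apply/andP; split; last exact: qfactor_shift.
by rewrite mulr_ge0 ?exprn_ge0 ?qfactor_ge0 // (le_trans ler01).
Qed.

Lemma qbinom_diff x n k : 1 < x -> (k <= n)%N ->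
  (x ^+ k.+2 - 1) / (x ^+ k.+1 - 1) * qbinom x (n + k.+2) k
    <= qbinom x (n + k.+2) k.+1 - x ^+ (k.+2 * k.+1) * qbinom x n k.+1.
Proof.
move=> x_gt1 le_kn; have x_ge1 := ltW x_gt1.
have -> : x ^+ (k.+2 * k.+1) * qbinom x n k.+1
    = \prod_(i < k.+1) (x ^+ k.+2 * qfactor x n i).
  by rewrite big_split /= prodr_const card_ord exprM.
have last_gap : qfactor x (n + k.+2) k - x ^+ k.+2 * qfactor x n k
    = (x ^+ k.+2 - 1) / (x ^+ k.+1 - 1).
  have xk1_neq1 : x ^+ k.+1 - 1 != 0 by rewrite subr_eq0 gt_eqF ?exprn_egt1.
  rewrite /qfactor (_ : (n + k.+2 - k = n.+2)%N); last by lia.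
  have -> : x ^+ n.+2 = x ^+ k.+2 * x ^+ (n - k) by rewrite -exprD; congr (_ ^+ _); lia.
  by field.
rewrite mulrC -last_gap.
apply: (ler_prodB_last (u := qfactor x (n + k.+2))
                       (v := fun i => x ^+ k.+2 * qfactor x n i)) => i _.
by rewrite qfactor_shift // mulr_ge0 ?exprn_ge0 ?qfactor_ge0 ?(le_trans ler01).
Qed.

Lemma gap_ratio_lt x y z th : 3 <= x -> 1 <= y -> 1 <= z -> 0 <= th ->
  2 * th <= y * x ^+ 2 ->
  1 + th * (y * x) * ((z - 1) / (y * x - 1))
    < y * (y * x) * ((x ^+ 2 * z - 1) / (y * x - 1)).
Proof.
move=> x_ge3 y_ge1 z_ge1 th_ge0 th_le.
have s_ge9 : 9 <= x ^+ 2 by rewrite expr2; nra.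
move: th_le s_ge9; set s := x ^+ 2 => th_le s_ge9.
have w_gt1 : 1 < y * x by nra.
move: w_gt1; set w := y * x => w_gt1.
have w1_gt0 : 0 < w - 1 by rewrite subr_gt0.
have -> : 1 + th * w * ((z - 1) / (w - 1)) = (w - 1 + th * w * (z - 1)) / (w - 1).
  by field; rewrite gt_eqF.
rewrite [X in _ < X]mulrA ltr_pM2r ?invr_gt0 //.
have yw_ge : w <= y * w by rewrite ler_peMl // ltW // (lt_trans ltr01).
have th_part : th * w * (z - 1) <= y * s / 2 * w * (z - 1).
  by rewrite ler_wpM2r ?subr_ge0 // ler_wpM2r ?(le_trans ler01 (ltW w_gt1)) //; lra.
have : 18 * (y * w) <= s * (z + 1) * (y * w).
  by rewrite ler_wpM2r ?(le_trans _ yw_ge) ?(le_trans ler01 (ltW w_gt1)) //; nra.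
lra.
Qed.

Lemma qbinom_gap_gt x th n M :
  3 <= x -> (M < n)%N -> 0 <= th -> 2 * th <= x ^+ M.+2 ->
  qbinom x (n + M.+1) M
      * (1 + th * x ^+ M.+1 * ((x ^+ n.+1 - 1) / (x ^+ M.+1 - 1)))
    < qbinom x (n + M.+3) M.+2 - x ^+ (M.+3 * M.+2) * qbinom x n M.+2.
Proof.
move=> x_ge3 lt_Mn th_ge0 th_le.
have x_gt1 : 1 < x by lra.
have x_ge0 : 0 <= x by lra.
set G := qbinom x (n + M.+1) M; set P := qbinom x (n + M.+3) M.
set u := qfactor x (n + M.+3) M.
have G_gt0 : 0 < G by apply: qbinom_gt0; lia.
have u_gt0 : 0 < u by apply: qfactor_gt0; lia.
have P_ge : x ^+ (2 * M) * G <= P.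
  have := qbinom_shift 2 (n + M.+1) M (ltW x_gt1).
  by rewrite (_ : (n + M.+1 + 2 = n + M.+3)%N); last lia.
have := qbinom_diff x_gt1 lt_Mn; rewrite qbinom_recr -/P -/u.
set c := (_ / _) => P_le.
have c_ge : x <= c.
  by rewrite /c ler_pdivlMr ?subr_gt0 ?exprn_egt1 // [x ^+ M.+3]exprS; lra.
have tail_lt : 1 + th * x ^+ M.+1 * ((x ^+ n.+1 - 1) / (x ^+ M.+1 - 1))
    < x ^+ (2 * M).+1 * u.
  have -> : x ^+ (2 * M).+1 = x ^+ M * (x ^+ M * x).
    by rewrite -!exprSr -exprD; congr (_ ^+ _); lia.
  rewrite /u /qfactor (_ : (n + M.+3 - M = 2 + n.+1)%N); last by lia.
  rewrite exprD [x ^+ M.+1]exprSr; apply: gap_ratio_lt => //.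
  - exact: exprn_ege1 (ltW x_gt1).
  - exact: exprn_ege1 (ltW x_gt1).
  - by rewrite -exprD addn2.
have xG_ge0 : 0 <= x ^+ (2 * M) * G by rewrite mulr_ge0 ?exprn_ge0 // ltW.
apply: (lt_le_trans (y := G * (x ^+ (2 * M).+1 * u))); first by rewrite ltr_pM2l.
apply: le_trans P_le; rewrite exprS.
rewrite (_ : G * _ = x * (x ^+ (2 * M) * G * u)); last by ring.
apply: le_trans (_ : c * (x ^+ (2 * M) * G * u) <= _).
  by rewrite ler_wpM2r // mulr_ge0 // ltW.
by rewrite ler_wpM2l ?(le_trans x_ge0 c_ge) // ler_wpM2r // ltW.
Qed.

Lemma qbinom_gap_gt_sub x th N m :
  3 <= x -> (2 * m < N)%N -> (2 <= m)%N -> 0 <= th -> 2 * th <= x ^+ m ->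
  qbinom x (N - 2) (m - 2)
      * (1 + th * x ^+ (m - 1) * ((x ^+ (N - m) - 1) / (x ^+ (m - 1) - 1)))
    < qbinom x N m - x ^+ ((m + 1) * m) * qbinom x (N - m - 1) m.
Proof.
move=> x_ge3 lt_2mN le_2m th_ge0 th_le.
case: m le_2m lt_2mN th_le => [|[|M]] // _ lt_2mN th_le.
have [n -> lt_Mn] : exists2 n, N = (n + M.+3)%N & (M < n)%N.
  by exists (N - M.+3)%N; lia.
have -> : (n + M.+3 - 2 = n + M.+1)%N by lia.
have -> : (M.+2 - 2 = M)%N by lia.
have -> : (M.+2 - 1 = M.+1)%N by lia.
have -> : (n + M.+3 - M.+2 - 1 = n)%N by lia.
have -> : (n + M.+3 - M.+2 = n.+1)%N by lia.
by rewrite addn1 qbinom_gap_gt.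
Qed.

End GaussianBinomial.

Lemma gauss_binomE q n k : gauss_binom q n k = qbinom (q%:R : rat) n k.
Proof. by []. Qed.

Lemma theta_ge0 q m : (1 < q)%N -> 0 <= theta q m.
Proof.
move=> q_gt1; have x_gt1 : 1 < (q%:R : rat) by rewrite ltr1n.
by rewrite /theta divr_ge0 // subr_ge0 ?exprn_ege1 // ltW.
Qed.

Lemma theta_le q a b : (1 < q)%N -> (a <= b)%N -> theta q a <= theta q b.
Proof.
move=> q_gt1 le_ab; have x_gt1 : 1 < (q%:R : rat) by rewrite ltr1n.
by rewrite /theta ler_wpM2r ?lerD2r ?ler_eXn2l // invr_ge0 subr_ge0 ltW.
Qed.

Lemma theta_le_half_exp q m : (3 <= q)%N -> 2 * theta q m <= (q%:R : rat) ^+ m.+1.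
Proof.
move=> q_ge3; have x_ge3 : 3 <= (q%:R : rat) by rewrite (ler_nat _ 3).
rewrite /theta mulrA ler_pdivrMr ?subr_gt0; last lra.
have : 1 <= (q%:R : rat) ^+ m.+1 by rewrite exprn_ege1 //; lra.
nra.
Qed.

Theorem mainTheorem18 (q n k t : nat) :
  prime_power q -> (3 <= q)%N -> (2 * k - t < n)%N -> (2 * t + 1 < k)%N ->
  theta q k - theta q (k - t) + gauss_binom q (n - t) (k - t)
    - (q%:R : rat) ^+ ((k - t + 1) * (k - t)) * gauss_binom q (n - k - 1) (k - t)
  > gauss_binom q (n - t - 2) (k - t - 2)
    * (1 + theta q (t + 1) * (q%:R : rat) ^+ (k - t - 1)
         * (((q%:R : rat) ^+ (n - k) - 1) / ((q%:R : rat) ^+ (k - t - 1) - 1))).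
Proof.
move=> _ q_ge3 lt_n lt_k.
have x_ge3 : 3 <= (q%:R : rat) by rewrite (ler_nat _ 3).
have theta_bound : 2 * theta q (t + 1) <= (q%:R : rat) ^+ (k - t).
  apply: le_trans (theta_le_half_exp _ q_ge3) _.
  by rewrite ler_eXn2l ?(lt_le_trans _ x_ge3) //; lia.
have lt_2m_N : (2 * (k - t) < n - t)%N by lia.
have le_2_m : (2 <= k - t)%N by lia.
have := qbinom_gap_gt_sub x_ge3 lt_2m_N le_2_m (theta_ge0 _ (ltnW q_ge3)) theta_bound.
rewrite -!gauss_binomE (_ : (n - t - (k - t) = n - k)%N); last by lia.
have := theta_le (ltnW q_ge3) (leq_subr t k).
lra.
Qed.
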